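(* Let $\mathfrak{Q}\subset\mathbb{R}^2$ be open, $\phi\colon S^1\times\mathfrak{Q}\to\mathbb{R}$ smooth ($S^1=\mathbb{R}/\mathbb{Z}$, $\phi_t:=\phi(t,\cdot)$), and $\mathbf{A}$ a twisted-periodic vector potential on $\mathfrak{Q}$ (see context). Then $$(\mathbf{A}^\phi)_t:=\mathbf{A}_t+\int_0^t\nabla\phi_s\,ds$$ is again a twisted-periodic vector potential on $\mathfrak{Q}$. Moreover, a smooth map $t\mapsto q(t)\in\mathfrak{Q}$ solves the $(\mathbf{A},\phi)$-equation $$\ddot q=-\bigl(\mathrm{rot}\,\mathbf{A}_t(q)\bigr)J_0\dot q-\dot{\mathbf{A}}_t(q)-\nabla\phi_t(q)$$ if and only if it solves the $(\mathbf{A}^\phi,0)$-equation $$\ddot q=-\bigl(\mathrm{rot}\,(\mathbf{A}^\phi)_t(q)\bigr)J_0\dot q-\dot{(\mathbf{A}^\phi)}_t(q).$$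
   Context: A twisted-periodic vector potential on $\mathfrak{Q}$ is a smooth map $\mathbf{A}\colon\mathbb{R}\times\mathfrak{Q}\to\mathbb{R}^2$, $\mathbf{A}_t=(A^1_t,A^2_t):=\mathbf{A}(t,\cdot)$, such that for all $t$: $\dot{\mathbf{A}}_{t+1}=\dot{\mathbf{A}}_t$, $\mathrm{rot}\,\mathbf{A}_{t+1}=\mathrm{rot}\,\mathbf{A}_t$, and $\mathbf{A}_{t+1}-\mathbf{A}_t=\nabla f_t$ with $f_t=f(t,\cdot)$ for some smooth $f\colon\mathbb{R}\times\mathfrak{Q}\to\mathbb{R}$. Here the dot is $\partial_t$, $\mathrm{rot}\,\mathbf{A}_t:=\partial_{q_1}A^2_t-\partial_{q_2}A^1_t$, and $J_0=\begin{pmatrix}0&-1\\1&0\end{pmatrix}$. *)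

From Stdlib Require Import Reals List.
From Coquelicot Require Import Coquelicot.
Open Scope R_scope.

(* A time-dependent scalar field on (an open subset of) R^2 is a curried
   function  g : R -> R -> R -> R,  g t x y  =  g(t,(x,y)). *)
Definition fld := R -> R -> R -> R.

Definition dt (g : fld) : fld := fun t x y => Derive (fun s => g s x y) t.
Definition dx (g : fld) : fld := fun t x y => Derive (fun s => g t s y) x.
Definition dy (g : fld) : fld := fun t x y => Derive (fun s => g t x s) y.

Definition dir (i : nat) : fld -> fld :=
  match i with 0 => dt | 1 => dx | _ => dy end.

Fixpoint dparts (l : list nat) (g : fld) : fld :=
  match l with nil => g | i :: l' => dir i (dparts l' g) end.

Definition uncurry3 (g : fld) : R * R * R -> R :=
  fun p => match p with (t, x, y) => g t x y end.

Definition smooth_on (Q : R * R -> Prop) (g : fld) : Prop :=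
  forall (l : list nat) (t x y : R), Q (x, y) ->
    continuous (uncurry3 (dparts l g)) (t, x, y) /\
    ex_derive (fun s => dparts l g s x y) t /\
    ex_derive (fun s => dparts l g t s y) x /\
    ex_derive (fun s => dparts l g t x s) y.

Definition smooth1 (u : R -> R) : Prop :=
  forall (n : nat) (t : R), ex_derive (Derive_n u n) t.

Definition rot (A1 A2 : fld) : fld := fun t x y => dx A2 t x y - dy A1 t x y.

Definition twisted_periodic (Q : R * R -> Prop) (A1 A2 : fld) : Prop :=
  smooth_on Q A1 /\ smooth_on Q A2 /\
  (forall t x y, Q (x, y) ->
     dt A1 (t + 1) x y = dt A1 t x y /\
     dt A2 (t + 1) x y = dt A2 t x y /\
     rot A1 A2 (t + 1) x y = rot A1 A2 t x y) /\
  exists f : fld, smooth_on Q f /\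
    forall t x y, Q (x, y) ->
      A1 (t + 1) x y - A1 t x y = dx f t x y /\
      A2 (t + 1) x y - A2 t x y = dy f t x y.

Definition Aphi1 (A1 phi : fld) : fld :=
  fun t x y => A1 t x y + RInt (fun s => dx phi s x y) 0 t.
Definition Aphi2 (A2 phi : fld) : fld :=
  fun t x y => A2 t x y + RInt (fun s => dy phi s x y) 0 t.

(* the (A,phi)-equation  q'' = -(rot A_t(q)) J0 q' - dA_t(q) - grad phi_t(q),
   with J0 (v1,v2) = (-v2, v1), written componentwise, for all times t *)
Definition solves (A1 A2 phi : fld) (q1 q2 : R -> R) : Prop :=
  forall t : R,
    Derive_n q1 2 t =
      rot A1 A2 t (q1 t) (q2 t) * Derive q2 t
      - dt A1 t (q1 t) (q2 t) - dx phi t (q1 t) (q2 t) /\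
    Derive_n q2 2 t =
      - (rot A1 A2 t (q1 t) (q2 t) * Derive q1 t)
      - dt A2 t (q1 t) (q2 t) - dy phi t (q1 t) (q2 t).

Definition zero_fld : fld := fun _ _ _ => 0.

From Stdlib Require Import Reals Lra FunctionalExtensionality ClassicalEpsilon.
From Coquelicot Require Import Coquelicot.
Open Scope R_scope.

(* With [Phi_t := int_0^t phi_s ds] (here [tprim phi]), the added term is [grad Phi_t], so [A^phi]
   is a gauge transform of [A]: its rotation is unchanged by Schwarz's theorem and
   [d_t A^phi = d_t A + grad phi], hence the two equations of motion agree term by term.
   [d_t A^phi] is periodic because [grad phi] is, and [A^phi_(t+1) - A^phi_t] is the gradient of
   [f_t + Phi_(t+1) - Phi_t]. The analytic content is that [Phi] is smooth on [R x Q]: its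
   partial derivatives are [phi] or again time primitives (differentiation under the integral
   sign), and its joint continuity follows from continuity of [phi] being uniform on compact
   time intervals. *)

Lemma continuous_uncurry3_eps (g : fld) t x y :
  continuous (uncurry3 g) (t, x, y) <->
  forall eps : posreal, exists d : posreal, forall t' x' y',
    Rabs (t' - t) < d -> Rabs (x' - x) < d -> Rabs (y' - y) < d ->
    Rabs (g t' x' y' - g t x y) < eps.
Proof.
  unfold continuous. rewrite filterlim_locally. split.
  - intros H eps. destruct (H eps) as [d Hd]. exists d. intros t' x' y' Ht Hx Hy.
    apply (Hd (t', x', y')). repeat split; assumption.
  - intros H eps. destruct (H eps) as [d Hd]. exists d.
    intros [[t' x'] y'] [[Ht Hx] Hy]. apply Hd; assumption.
Qed.

Lemma Rabs_minus_diag_lt (d : posreal) x : Rabs (x - x) < d.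
Proof. rewrite Rminus_diag, Rabs_R0. apply cond_pos. Qed.

Lemma dparts_app l1 l2 g : dparts (l1 ++ l2) g = dparts l1 (dparts l2 g).
Proof. induction l1 as [|i l1 IH]; simpl; [reflexivity | now rewrite IH]. Qed.

Definition fplus (F G : fld) : fld := fun t x y => F t x y + G t x y.
Definition fscal (c : R) (F : fld) : fld := fun t x y => c * F t x y.
Definition fshift (c : R) (F : fld) : fld := fun t x y => F (t + c) x y.
Definition tprim (g : fld) : fld := fun t x y => RInt (fun s => g s x y) 0 t.

Lemma dparts_scal l c F : dparts l (fscal c F) = fscal c (dparts l F).
Proof.
  induction l as [|i l IH]; simpl; [reflexivity |]. rewrite IH.
  extensionality t; extensionality x; extensionality y.
  destruct i as [|[|i]]; apply Derive_scal.
Qed.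

Lemma Derive_shift (f : R -> R) c t : Derive (fun s => f (s + c)) t = Derive f (t + c).
Proof.
  unfold Derive. f_equal. apply Lim_ext. intros h. do 3 f_equal. ring.
Qed.

Lemma dparts_shift l c F : dparts l (fshift c F) = fshift c (dparts l F).
Proof.
  induction l as [|i l IH]; simpl; [reflexivity |]. rewrite IH.
  extensionality t; extensionality x; extensionality y.
  destruct i as [|[|i]]; [apply (Derive_shift (fun s => dparts l F s x y)) | reflexivity ..].
Qed.

Section SmoothFields.

Variable Q : R * R -> Prop.
Hypothesis HQ : open Q.

Lemma Q_ball x y : Q (x, y) ->
  exists r : posreal, forall x' y', Rabs (x' - x) < r -> Rabs (y' - y) < r -> Q (x', y').
Proof.
  intros Hq. destruct (HQ _ Hq) as [r Hr]. exists r.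
  intros x' y' Hx Hy. apply Hr. split; assumption.
Qed.

Lemma Q_near_x x y : Q (x, y) -> locally x (fun u => Q (u, y)).
Proof.
  intros Hq. destruct (Q_ball x y Hq) as [r Hr]. exists r. intros u Hu.
  apply Hr; [exact Hu | apply Rabs_minus_diag_lt].
Qed.

Lemma Q_near_y x y : Q (x, y) -> locally y (fun u => Q (x, u)).
Proof.
  intros Hq. destruct (Q_ball x y Hq) as [r Hr]. exists r. intros u Hu.
  apply Hr; [apply Rabs_minus_diag_lt | exact Hu].
Qed.

Definition eq_on (F G : fld) := forall t x y, Q (x, y) -> F t x y = G t x y.

Lemma dir_eq_on i F G : eq_on F G -> eq_on (dir i F) (dir i G).
Proof.
  intros E t x y Hq. destruct i as [|[|i]]; simpl; unfold dt, dx, dy.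
  - apply Derive_ext. intros s. apply E, Hq.
  - apply Derive_ext_loc. eapply filter_imp; [| exact (Q_near_x x y Hq)]. intros u Hu. apply E, Hu.
  - apply Derive_ext_loc. eapply filter_imp; [| exact (Q_near_y x y Hq)]. intros u Hu. apply E, Hu.
Qed.

Lemma dparts_eq_on l F G : eq_on F G -> eq_on (dparts l F) (dparts l G).
Proof. intros E. induction l as [|i l IH]; simpl; [exact E | apply dir_eq_on, IH]. Qed.

Definition regular (g : fld) := forall t x y, Q (x, y) ->
  continuous (uncurry3 g) (t, x, y) /\
  ex_derive (fun s => g s x y) t /\ ex_derive (fun s => g t s y) x /\
  ex_derive (fun s => g t x s) y.

Lemma smooth_onE g : smooth_on Q g <-> forall l, regular (dparts l g).
Proof. reflexivity. Qed.

Lemma smooth_regular l g : smooth_on Q g -> regular (dparts l g).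
Proof. intros S. exact (S l). Qed.

Lemma smooth_dparts l g : smooth_on Q g -> smooth_on Q (dparts l g).
Proof. intros S. apply smooth_onE. intros l'. rewrite <- dparts_app. apply smooth_regular, S. Qed.

Lemma regular_eq_on F G : eq_on F G -> regular G -> regular F.
Proof.
  intros E RG t x y Hq. destruct (RG t x y Hq) as [C [Dt [Dx Dy]]]. repeat split.
  - apply (continuous_ext_loc _ (uncurry3 G)); [| exact C].
    destruct (Q_ball x y Hq) as [r Hr]. exists r.
    intros [[t' x'] y'] [[_ Hx] Hy]. symmetry. apply E, Hr; assumption.
  - apply (ex_derive_ext (fun s => G s x y)); [intros s; symmetry; apply E, Hq | exact Dt].
  - apply (ex_derive_ext_loc (fun s => G t s y)); [| exact Dx].
    eapply filter_imp; [| exact (Q_near_x x y Hq)]. intros u Hu. symmetry. apply E, Hu.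
  - apply (ex_derive_ext_loc (fun s => G t x s)); [| exact Dy].
    eapply filter_imp; [| exact (Q_near_y x y Hq)]. intros u Hu. symmetry. apply E, Hu.
Qed.

Lemma regular_plus F G : regular F -> regular G -> regular (fplus F G).
Proof.
  intros RF RG t x y Hq.
  destruct (RF t x y Hq) as [CF [DtF [DxF DyF]]], (RG t x y Hq) as [CG [DtG [DxG DyG]]].
  repeat split.
  - apply (continuous_ext (fun p => plus (uncurry3 F p) (uncurry3 G p))).
    + intros [[t' x'] y']. reflexivity.
    + exact (continuous_plus _ _ _ CF CG).
  - apply (ex_derive_plus (fun s => F s x y) (fun s => G s x y)); assumption.
  - apply (ex_derive_plus (fun s => F t s y) (fun s => G t s y)); assumption.
  - apply (ex_derive_plus (fun s => F t x s) (fun s => G t x s)); assumption.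
Qed.

Lemma regular_scal c F : regular F -> regular (fscal c F).
Proof.
  intros RF t x y Hq. destruct (RF t x y Hq) as [C [Dt [Dx Dy]]]. repeat split.
  - apply (continuous_ext (fun p => scal c (uncurry3 F p))).
    + intros [[t' x'] y']. reflexivity.
    + exact (continuous_scal_r c _ _ C).
  - apply ex_derive_scal, Dt.
  - apply ex_derive_scal, Dx.
  - apply ex_derive_scal, Dy.
Qed.

Lemma regular_shift c F : regular F -> regular (fshift c F).
Proof.
  intros RF t x y Hq. destruct (RF (t + c) x y Hq) as [C [Dt [Dx Dy]]].
  repeat split; try assumption.
  - apply continuous_uncurry3_eps. intros eps.
    destruct (proj1 (continuous_uncurry3_eps _ _ _ _) C eps) as [d Hd]. exists d.
    intros t' x' y' Ht Hx Hy. apply Hd; [| assumption ..].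
    replace (t' + c - (t + c)) with (t' - t) by ring. exact Ht.
  - apply (ex_derive_comp (fun s => F s x y) (fun s => s + c)); [exact Dt |].
    apply (ex_derive_plus (fun s => s) (fun _ => c)); [apply ex_derive_id | apply ex_derive_const].
Qed.

Lemma dir_plus i F G : regular F -> regular G ->
  eq_on (dir i (fplus F G)) (fplus (dir i F) (dir i G)).
Proof.
  intros RF RG t x y Hq. destruct (RF t x y Hq) as [_ DF], (RG t x y Hq) as [_ DG].
  destruct i as [|[|i]]; simpl; unfold dt, dx, dy, fplus; apply Derive_plus; tauto.
Qed.

Lemma dparts_plus l F G : smooth_on Q F -> smooth_on Q G ->
  eq_on (dparts l (fplus F G)) (fplus (dparts l F) (dparts l G)).
Proof.
  intros SF SG. induction l as [|i l IH]; simpl; [intros t x y _; reflexivity |].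
  intros t x y Hq. rewrite (dir_eq_on i _ _ IH t x y Hq).
  apply dir_plus; [apply (smooth_regular l), SF | apply (smooth_regular l), SG | exact Hq].
Qed.

Lemma smooth_plus F G : smooth_on Q F -> smooth_on Q G -> smooth_on Q (fplus F G).
Proof.
  intros SF SG. apply smooth_onE. intros l.
  apply (regular_eq_on _ _ (dparts_plus l F G SF SG)).
  apply regular_plus; apply smooth_regular; assumption.
Qed.

Lemma smooth_scal c F : smooth_on Q F -> smooth_on Q (fscal c F).
Proof.
  intros SF. apply smooth_onE. intros l. rewrite dparts_scal.
  apply regular_scal, smooth_regular, SF.
Qed.

Lemma smooth_shift c F : smooth_on Q F -> smooth_on Q (fshift c F).
Proof.
  intros SF. apply smooth_onE. intros l. rewrite dparts_shift.
  apply regular_shift, smooth_regular, SF.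
Qed.

Lemma regular_continuous_t h s x y : regular h -> Q (x, y) -> continuous (fun s => h s x y) s.
Proof. intros Rh Hq. apply (ex_derive_continuous (fun s => h s x y)), (Rh s x y Hq). Qed.

Lemma regular_ex_RInt h x y a b : regular h -> Q (x, y) -> ex_RInt (fun s => h s x y) a b.
Proof.
  intros Rh Hq. apply (ex_RInt_continuous (V := R_CompleteNormedModule)).
  intros s _. apply regular_continuous_t; assumption.
Qed.

Lemma is_derive_tprim_t h t x y : regular h -> Q (x, y) ->
  is_derive (fun s => tprim h s x y) t (h t x y).
Proof.
  intros Rh Hq. apply (is_derive_RInt (V := R_CompleteNormedModule) (fun s => h s x y) _ 0).
  - apply filter_forall. intros b. apply RInt_correct, regular_ex_RInt; assumption.
  - apply regular_continuous_t; assumption.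
Qed.

Lemma is_derive_tprim_x h t x y : regular h -> regular (dx h) -> Q (x, y) ->
  is_derive (fun u => tprim h t u y) x (tprim (dx h) t x y).
Proof.
  intros Rh Rdh Hq. apply (is_derive_RInt_param (fun u s => h s u y) 0 t x).
  - eapply filter_imp; [| exact (Q_near_x x y Hq)]. intros u Hu s _. apply (Rh s u y Hu).
  - intros s _ eps.
    destruct (proj1 (continuous_uncurry3_eps _ _ _ _) (proj1 (Rdh s x y Hq)) eps) as [d Hd].
    exists d. intros u v Hu Hv. apply Hd; [exact Hv | exact Hu | apply Rabs_minus_diag_lt].
  - eapply filter_imp; [| exact (Q_near_x x y Hq)]. intros u Hu. apply regular_ex_RInt; assumption.
Qed.

Lemma is_derive_tprim_y h t x y : regular h -> regular (dy h) -> Q (x, y) ->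
  is_derive (fun u => tprim h t x u) y (tprim (dy h) t x y).
Proof.
  intros Rh Rdh Hq. apply (is_derive_RInt_param (fun u s => h s x u) 0 t y).
  - eapply filter_imp; [| exact (Q_near_y x y Hq)]. intros u Hu s _. apply (Rh s x u Hu).
  - intros s _ eps.
    destruct (proj1 (continuous_uncurry3_eps _ _ _ _) (proj1 (Rdh s x y Hq)) eps) as [d Hd].
    exists d. intros u v Hu Hv. apply Hd; [exact Hv | apply Rabs_minus_diag_lt | exact Hu].
  - eapply filter_imp; [| exact (Q_near_y x y Hq)]. intros u Hu. apply regular_ex_RInt; assumption.
Qed.

Lemma regular_equicontinuous h x y a b : regular h -> Q (x, y) ->
  forall eps : posreal, exists d : posreal, forall s x' y', a <= s <= b ->
    Rabs (x' - x) < d -> Rabs (y' - y) < d -> Rabs (h s x' y' - h s x y) < eps.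
Proof.
  intros Rh Hq eps.
  assert (Hc : forall s, exists d : posreal, forall t' x' y',
    Rabs (t' - s) < d -> Rabs (x' - x) < d -> Rabs (y' - y) < d ->
    Rabs (h t' x' y' - h s x y) < pos_div_2 eps).
  { intros s. apply continuous_uncurry3_eps, (Rh s x y Hq). }
  destruct (compactness_value_1d a b
    (fun s => proj1_sig (constructive_indefinite_description _ (Hc s)))) as [d Hd].
  exists d. intros s x' y' Hs Hx Hy.
  destruct (Rlt_dec (Rabs (h s x' y' - h s x y)) eps) as [ok | ko]; [exact ok | exfalso].
  apply (Hd s Hs). intros [s0 [_ [Hs0 Hd0]]]. apply ko.
  destruct (constructive_indefinite_description _ (Hc s0)) as [d0 H0]. simpl in Hs0, Hd0.
  assert (A1 : Rabs (h s x' y' - h s0 x y) < eps / 2) by (apply H0; lra).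
  assert (A2 : Rabs (h s x y - h s0 x y) < eps / 2)
    by (apply H0; [lra | apply Rabs_minus_diag_lt ..]).
  replace (h s x' y' - h s x y) with ((h s x' y' - h s0 x y) - (h s x y - h s0 x y)) by ring.
  eapply Rle_lt_trans; [apply Rabs_triang |]. rewrite Rabs_Ropp. lra.
Qed.

Lemma tprim_diff_xy_le h t x y x' y' K : regular h -> Q (x, y) -> Q (x', y') ->
  (forall s, Rmin 0 t <= s <= Rmax 0 t -> Rabs (h s x' y' - h s x y) <= K) ->
  Rabs (tprim h t x' y' - tprim h t x y) <= Rabs t * K.
Proof.
  intros Rh Hq Hq' HK.
  assert (E : RInt (fun s => h s x' y' - h s x y) 0 t = tprim h t x' y' - tprim h t x y).
  { apply (RInt_minus (V := R_CompleteNormedModule) (fun s => h s x' y') (fun s => h s x y));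
      apply regular_ex_RInt; assumption. }
  rewrite <- E. replace (Rabs t) with (Rabs (t - 0)) by now rewrite Rminus_0_r.
  apply (norm_RInt_le_const_abs (fun s => h s x' y' - h s x y)); [exact HK |].
  apply (RInt_correct (V := R_CompleteNormedModule)),
    (ex_RInt_minus (V := R_CompleteNormedModule) (fun s => h s x' y') (fun s => h s x y));
    apply regular_ex_RInt; assumption.
Qed.

Lemma continuous_tprim h t x y : regular h -> Q (x, y) -> continuous (uncurry3 (tprim h)) (t, x, y).
Proof.
  intros Rh Hq. apply continuous_uncurry3_eps. intros eps.
  (* For [|t' - t| < 1], every time between [0] and [t'] lies in [[-M, M]]. *)
  set (M := Rabs t + 1).
  assert (HM : 0 < M) by (unfold M; pose proof (Rabs_pos t); lra).
  assert (He : 0 < eps / (2 * M)) by (apply Rdiv_lt_0_compat; [apply cond_pos | lra]).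
  destruct (regular_equicontinuous h x y (- M) M Rh Hq (mkposreal _ He)) as [d1 H1].
  pose proof (ex_derive_continuous _ _ (ex_intro _ _ (is_derive_tprim_t h t x y Rh Hq))) as Ct.
  destruct (proj1 (filterlim_locally _ _) Ct (pos_div_2 eps)) as [d2 H2].
  destruct (Q_ball x y Hq) as [r Hr].
  assert (Hd : 0 < Rmin (Rmin d1 d2) (Rmin r 1))
    by (repeat apply Rmin_pos; try apply cond_pos; lra).
  exists (mkposreal _ Hd). simpl. intros t' x' y' Ht Hx Hy.
  pose proof (Rmin_l (Rmin d1 d2) (Rmin r 1)). pose proof (Rmin_r (Rmin d1 d2) (Rmin r 1)).
  pose proof (Rmin_l d1 d2). pose proof (Rmin_r d1 d2).
  pose proof (Rmin_l r 1). pose proof (Rmin_r r 1).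
  assert (Ht1 : Rabs t' <= M) by (unfold M; pose proof (Rabs_triang_inv t' t); lra).
  assert (Bxy : Rabs (tprim h t' x' y' - tprim h t' x y) <= Rabs t' * (eps / (2 * M))).
  { apply tprim_diff_xy_le; try assumption; [apply Hr; lra |].
    intros s Hs. left. apply H1; try lra.
    apply Rabs_le_between in Ht1. unfold Rmin, Rmax in Hs. destruct (Rle_dec 0 t'); lra. }
  assert (Bt : Rabs (tprim h t' x y - tprim h t x y) < eps / 2).
  { apply (H2 t'). change (Rabs (t' - t) < d2). lra. }
  assert (Rabs t' * (eps / (2 * M)) <= eps / 2).
  { replace (eps / 2) with (M * (eps / (2 * M))) by (field; lra).
    apply Rmult_le_compat_r; lra. }
  replace (tprim h t' x' y' - tprim h t x y)
    with ((tprim h t' x' y' - tprim h t' x y) + (tprim h t' x y - tprim h t x y)) by ring.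
  eapply Rle_lt_trans; [apply Rabs_triang | lra].
Qed.

Lemma regular_tprim h : smooth_on Q h -> regular (tprim h).
Proof.
  intros Sh t x y Hq.
  assert (Rh : regular h) by exact (smooth_regular nil h Sh).
  repeat split.
  - apply continuous_tprim; assumption.
  - eexists. apply is_derive_tprim_t; assumption.
  - eexists. apply is_derive_tprim_x; [exact Rh | exact (smooth_regular (1%nat :: nil) h Sh) | ].
    exact Hq.
  - eexists. apply is_derive_tprim_y; [exact Rh | exact (smooth_regular (2%nat :: nil) h Sh) | ].
    exact Hq.
Qed.

Lemma dt_tprim h : regular h -> eq_on (dt (tprim h)) h.
Proof. intros Rh t x y Hq. apply is_derive_unique, is_derive_tprim_t; assumption. Qed.

Lemma dx_tprim h : regular h -> regular (dx h) -> eq_on (dx (tprim h)) (tprim (dx h)).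
Proof. intros Rh Rdh t x y Hq. apply is_derive_unique, is_derive_tprim_x; assumption. Qed.

Lemma dy_tprim h : regular h -> regular (dy h) -> eq_on (dy (tprim h)) (tprim (dy h)).
Proof. intros Rh Rdh t x y Hq. apply is_derive_unique, is_derive_tprim_y; assumption. Qed.

Lemma eq_on_trans F G H : eq_on F G -> eq_on G H -> eq_on F H.
Proof. intros E1 E2 t x y Hq. rewrite E1, E2 by exact Hq. reflexivity. Qed.

Lemma dir_tprim i h : smooth_on Q h -> exists h', smooth_on Q h' /\
  (eq_on (dir i (tprim h)) h' \/ eq_on (dir i (tprim h)) (tprim h')).
Proof.
  intros Sh. pose proof (smooth_regular nil h Sh) as Rh.
  destruct i as [|[|i]]; simpl.
  - exists h. split; [exact Sh |]. left. apply dt_tprim, Rh.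
  - exists (dx h). split; [apply (smooth_dparts (1%nat :: nil)), Sh |]. right.
    apply dx_tprim; [exact Rh | exact (smooth_regular (1%nat :: nil) h Sh)].
  - exists (dy h). split; [apply (smooth_dparts (2%nat :: nil)), Sh |]. right.
    apply dy_tprim; [exact Rh | exact (smooth_regular (2%nat :: nil) h Sh)].
Qed.

Lemma dparts_tprim l h : smooth_on Q h -> exists h', smooth_on Q h' /\
  (eq_on (dparts l (tprim h)) h' \/ eq_on (dparts l (tprim h)) (tprim h')).
Proof.
  intros Sh. induction l as [|i l IH]; simpl.
  - exists h. split; [exact Sh |]. right. intros t x y _. reflexivity.
  - destruct IH as [h1 [S1 [E1 | E1]]].
    + exists (dir i h1). split; [apply (smooth_dparts (i :: nil)), S1 |]. left. apply dir_eq_on, E1.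
    + destruct (dir_tprim i h1 S1) as [h2 [S2 E2]]. exists h2. split; [exact S2 |].
      destruct E2 as [E2 | E2]; [left | right]; eapply eq_on_trans; eauto using dir_eq_on.
Qed.

Lemma smooth_tprim h : smooth_on Q h -> smooth_on Q (tprim h).
Proof.
  intros Sh. apply smooth_onE. intros l.
  destruct (dparts_tprim l h Sh) as [h' [S' [E | E]]]; apply (regular_eq_on _ _ E).
  - apply (smooth_regular nil), S'.
  - apply regular_tprim, S'.
Qed.

Lemma smooth_dx_dy g : smooth_on Q g -> eq_on (dx (dy g)) (dy (dx g)).
Proof.
  intros Sg t x y Hq. apply (Schwarz (fun u v => g t u v) x y).
  - destruct (Q_ball x y Hq) as [r Hr]. exists r. intros u v Hu Hv.
    assert (Huv : Q (u, v)) by (apply Hr; assumption).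
    destruct (smooth_regular nil g Sg t u v Huv) as [_ [_ [Dx Dy]]].
    destruct (smooth_regular (2%nat :: nil) g Sg t u v Huv) as [_ [_ [Dxy _]]].
    destruct (smooth_regular (1%nat :: nil) g Sg t u v Huv) as [_ [_ [_ Dyx]]].
    repeat split; assumption.
  - intros eps.
    destruct (proj1 (continuous_uncurry3_eps _ _ _ _)
      (proj1 (smooth_regular (1%nat :: 2%nat :: nil) g Sg t x y Hq)) eps) as [d Hd].
    exists d. intros u v Hu Hv. apply Hd; [apply Rabs_minus_diag_lt | exact Hu | exact Hv].
  - intros eps.
    destruct (proj1 (continuous_uncurry3_eps _ _ _ _)
      (proj1 (smooth_regular (2%nat :: 1%nat :: nil) g Sg t x y Hq)) eps) as [d Hd].
    exists d. intros u v Hu Hv. apply Hd; [apply Rabs_minus_diag_lt | exact Hu | exact Hv].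
Qed.

Lemma dparts_periodic l c g : eq_on (fshift c g) g -> eq_on (fshift c (dparts l g)) (dparts l g).
Proof. intros E. rewrite <- dparts_shift. apply dparts_eq_on, E. Qed.

Lemma dt_plus_tprim F h : smooth_on Q F -> smooth_on Q h ->
  eq_on (dt (fplus F (tprim h))) (fplus (dt F) h).
Proof.
  intros SF Sh t x y Hq. transitivity (fplus (dir 0 F) (dir 0 (tprim h)) t x y).
  { refine (dir_plus 0 F (tprim h) _ _ t x y Hq);
      [apply (smooth_regular nil), SF | apply regular_tprim, Sh]. }
  unfold fplus; simpl. rewrite dt_tprim; [reflexivity | apply (smooth_regular nil), Sh | exact Hq].
Qed.

Lemma dx_plus_tprim F h : smooth_on Q F -> smooth_on Q h ->
  eq_on (dx (fplus F (tprim h))) (fplus (dx F) (tprim (dx h))).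
Proof.
  intros SF Sh t x y Hq. transitivity (fplus (dir 1 F) (dir 1 (tprim h)) t x y).
  { refine (dir_plus 1 F (tprim h) _ _ t x y Hq);
      [apply (smooth_regular nil), SF | apply regular_tprim, Sh]. }
  unfold fplus; simpl. rewrite dx_tprim; [reflexivity | apply (smooth_regular nil), Sh |
    apply (smooth_regular (1%nat :: nil)), Sh | exact Hq].
Qed.

Lemma dy_plus_tprim F h : smooth_on Q F -> smooth_on Q h ->
  eq_on (dy (fplus F (tprim h))) (fplus (dy F) (tprim (dy h))).
Proof.
  intros SF Sh t x y Hq. transitivity (fplus (dir 2 F) (dir 2 (tprim h)) t x y).
  { refine (dir_plus 2 F (tprim h) _ _ t x y Hq);
      [apply (smooth_regular nil), SF | apply regular_tprim, Sh]. }
  unfold fplus; simpl. rewrite dy_tprim; [reflexivity | apply (smooth_regular nil), Sh |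
    apply (smooth_regular (2%nat :: nil)), Sh | exact Hq].
Qed.

Lemma rot_plus_grad_tprim A1 A2 phi : smooth_on Q A1 -> smooth_on Q A2 -> smooth_on Q phi ->
  eq_on (rot (fplus A1 (tprim (dx phi))) (fplus A2 (tprim (dy phi)))) (rot A1 A2).
Proof.
  intros S1 S2 Sphi t x y Hq.
  assert (Sx : smooth_on Q (dx phi)) by exact (smooth_dparts (1%nat :: nil) phi Sphi).
  assert (Sy : smooth_on Q (dy phi)) by exact (smooth_dparts (2%nat :: nil) phi Sphi).
  unfold rot. rewrite dx_plus_tprim, dy_plus_tprim by assumption. unfold fplus.
  replace (tprim (dx (dy phi)) t x y) with (tprim (dy (dx phi)) t x y); [ring |].
  apply RInt_ext. intros s _. symmetry. apply smooth_dx_dy; assumption.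
Qed.

End SmoothFields.

Section GaugeTransformation.

Variable Q : R * R -> Prop.
Hypothesis HQ : open Q.
Variable phi : fld.
Hypothesis Sphi : smooth_on Q phi.

Let Sdx : smooth_on Q (dx phi) := smooth_dparts Q (1%nat :: nil) phi Sphi.
Let Sdy : smooth_on Q (dy phi) := smooth_dparts Q (2%nat :: nil) phi Sphi.

Lemma dt_Aphi1 A1 : smooth_on Q A1 -> eq_on Q (dt (Aphi1 A1 phi)) (fplus (dt A1) (dx phi)).
Proof. intros S1. exact (dt_plus_tprim Q HQ A1 (dx phi) S1 Sdx). Qed.

Lemma dt_Aphi2 A2 : smooth_on Q A2 -> eq_on Q (dt (Aphi2 A2 phi)) (fplus (dt A2) (dy phi)).
Proof. intros S2. exact (dt_plus_tprim Q HQ A2 (dy phi) S2 Sdy). Qed.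

Lemma rot_Aphi A1 A2 : smooth_on Q A1 -> smooth_on Q A2 ->
  eq_on Q (rot (Aphi1 A1 phi) (Aphi2 A2 phi)) (rot A1 A2).
Proof. intros S1 S2. exact (rot_plus_grad_tprim Q HQ A1 A2 phi S1 S2 Sphi). Qed.

Lemma Aphi_increment_grad A1 A2 f : smooth_on Q f ->
  (forall t x y, Q (x, y) ->
     A1 (t + 1) x y - A1 t x y = dx f t x y /\ A2 (t + 1) x y - A2 t x y = dy f t x y) ->
  exists f', smooth_on Q f' /\ forall t x y, Q (x, y) ->
    Aphi1 A1 phi (t + 1) x y - Aphi1 A1 phi t x y = dx f' t x y /\
    Aphi2 A2 phi (t + 1) x y - Aphi2 A2 phi t x y = dy f' t x y.
Proof.
  intros Sf Hf.
  pose proof (smooth_regular Q nil phi Sphi) as Rphi.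
  pose proof (smooth_regular Q nil (dx phi) Sdx) as Rdx.
  pose proof (smooth_regular Q nil (dy phi) Sdy) as Rdy.
  exists (fplus f (fplus (fshift 1 (tprim phi)) (fscal (-1) (tprim phi)))). split.
  { apply smooth_plus; [exact HQ | exact Sf |].
    apply smooth_plus; [exact HQ | apply smooth_shift | apply smooth_scal];
      apply smooth_tprim; assumption. }
  intros t x y Hq. destruct (Hf t x y Hq) as [F1 F2], (Sf nil t x y Hq) as [_ [_ [Dfx Dfy]]].
  split; symmetry; apply is_derive_unique; unfold Aphi1, Aphi2.
  - replace (A1 (t + 1) x y + _ - _) with
      (dx f t x y + (tprim (dx phi) (t + 1) x y + -1 * tprim (dx phi) t x y))
      by (rewrite <- F1; unfold tprim; ring).
    apply (is_derive_plus (fun u => f t u y)); [apply Derive_correct, Dfx |].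
    apply (is_derive_plus (fun u => tprim phi (t + 1) u y));
      [| apply (is_derive_scal (fun u => tprim phi t u y))];
      apply (is_derive_tprim_x Q HQ); assumption.
  - replace (A2 (t + 1) x y + _ - _) with
      (dy f t x y + (tprim (dy phi) (t + 1) x y + -1 * tprim (dy phi) t x y))
      by (rewrite <- F2; unfold tprim; ring).
    apply (is_derive_plus (fun u => f t x u)); [apply Derive_correct, Dfy |].
    apply (is_derive_plus (fun u => tprim phi (t + 1) x u));
      [| apply (is_derive_scal (fun u => tprim phi t x u))];
      apply (is_derive_tprim_y Q HQ); assumption.
Qed.

Lemma Aphi_twisted_periodic A1 A2 : eq_on Q (fshift 1 phi) phi -> twisted_periodic Q A1 A2 ->
  twisted_periodic Q (Aphi1 A1 phi) (Aphi2 A2 phi).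
Proof.
  intros Pphi [S1 [S2 [PA [f [Sf Hf]]]]]. split; [| split; [| split]].
  - apply smooth_plus; [exact HQ | exact S1 | apply smooth_tprim; assumption].
  - apply smooth_plus; [exact HQ | exact S2 | apply smooth_tprim; assumption].
  - intros t x y Hq. destruct (PA t x y Hq) as [P1 [P2 P3]].
    pose proof (dparts_periodic Q HQ (1%nat :: nil) 1 phi Pphi t x y Hq) as Px.
    pose proof (dparts_periodic Q HQ (2%nat :: nil) 1 phi Pphi t x y Hq) as Py.
    simpl in Px, Py. unfold fshift in Px, Py.
    rewrite !(dt_Aphi1 A1 S1 _ _ _ Hq), !(dt_Aphi2 A2 S2 _ _ _ Hq),
      !(rot_Aphi A1 A2 S1 S2 _ _ _ Hq).
    unfold fplus. rewrite P1, P2, P3, Px, Py. auto.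
  - apply (Aphi_increment_grad A1 A2 f); assumption.
Qed.

Lemma solves_Aphi A1 A2 q1 q2 : smooth_on Q A1 -> smooth_on Q A2 -> (forall t, Q (q1 t, q2 t)) ->
  solves A1 A2 phi q1 q2 <-> solves (Aphi1 A1 phi) (Aphi2 A2 phi) zero_fld q1 q2.
Proof.
  intros S1 S2 Hq.
  assert (Z : forall t x y, dx zero_fld t x y = 0 /\ dy zero_fld t x y = 0)
    by (unfold dx, dy, zero_fld; split; apply Derive_const).
  unfold solves. split; intros H t; specialize (H t); pose proof (Hq t) as Hqt;
    destruct (Z t (q1 t) (q2 t)) as [Zx Zy];
    rewrite (dt_Aphi1 A1 S1 t _ _ Hqt), (dt_Aphi2 A2 S2 t _ _ Hqt),
      (rot_Aphi A1 A2 S1 S2 t _ _ Hqt), Zx, Zy in *; unfold fplus in *; lra.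
Qed.

End GaugeTransformation.

Theorem lemma3p7 (Q : R * R -> Prop) (phi A1 A2 : fld) :
  open Q ->
  smooth_on Q phi ->
  (forall t x y, Q (x, y) -> phi (t + 1) x y = phi t x y) ->
  twisted_periodic Q A1 A2 ->
  twisted_periodic Q (Aphi1 A1 phi) (Aphi2 A2 phi) /\
  (forall q1 q2 : R -> R,
     smooth1 q1 -> smooth1 q2 -> (forall t, Q (q1 t, q2 t)) ->
     (solves A1 A2 phi q1 q2 <->
      solves (Aphi1 A1 phi) (Aphi2 A2 phi) zero_fld q1 q2)).
Proof.
  intros HQ Sphi Pphi TA. split.
  - exact (Aphi_twisted_periodic Q HQ phi Sphi A1 A2 Pphi TA).
  - intros q1 q2 _ _ Hq. destruct TA as [S1 [S2 _]].
    exact (solves_Aphi Q HQ phi Sphi A1 A2 q1 q2 S1 S2 Hq).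
Qed.
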